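(* Let $u,i,v,j\in\mathbb{Z}_n$ with $\alpha=\dim L(u,i)\leqslant\beta=\dim L(v,j)$. Let $h\in L(u,i)$ and $h'\in L(v,j)$ be nonzero vectors annihilated by $X$ (so $e_ih=h$, $e_jh'=h'$). Then the elements $z_{s,t}=\gamma_i^sh\otimes\gamma_j^th'$ ($0\leqslant s\leqslant\alpha-1$, $0\leqslant t\leqslant\beta-1$) form a basis of $L(u,i)\otimes L(v,j)$. Grading $L(u,i)\otimes L(v,j)$ by $\deg z_{s,t}=s+t$, the kernel of the action of $X$ on $L(u,i)\otimes L(v,j)$ has dimension $\alpha$ and is spanned by elements $x_\theta$, $0\leqslant\theta\leqslant\alpha-1$, with $x_\theta$ homogeneous of degree $\theta$ (one element up to scalars in each such degree).
   Context: $k$ is an algebraically closed field; $n,d$ integers with $d\geqslant2$, $d\mid n$, $\mathrm{char}\,k\nmid n$; $q$ a primitive $d$-th root of unity. $\Lambda_{n,d}$ is the path algebra of the cyclic quiver with vertices $e_i$ and arrows $a_i:e_i\to e_{i+1}$ ($i\in\mathbb{Z}_n$) modulo all paths of length $d$; $\gamma_i^m=a_{i+m-1}\cdots a_i$, $\gamma_i^0=e_i$. $\mathcal{D}(\Lambda_{n,d})$ is the Drinfel'd double of the Hopf algebra $\Lambda_{n,d}$; concretely it is generated by $G,X,e_i,a_i$ with relations $G^n=1$, $X^d=0$, $GX=q^{-1}XG$, products of paths as in $\Lambda_{n,d}$, $\gamma_\ell^mG=q^{-m}G\gamma_\ell^m$, $\gamma_\ell^mX=q^{-m}X\gamma_{\ell+1}^m-q^{-m}(m)_q\gamma_{\ell+1}^{m-1}+q^{\ell+1-m}(m)_qG\gamma_{\ell+1}^{m-1}$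 ($(m)_q=1+\cdots+q^{m-1}$), with comultiplication $\Delta(G)=G\otimes G$, $\Delta(X)=X\otimes G+1\otimes X$, $\Delta(e_i)=\sum_{s+t=i}e_s\otimes e_t$, $\Delta(a_i)=\sum_{s+t=i}(e_s\otimes a_t+q^ta_s\otimes e_t)$; tensor products of modules are over $k$ with action via $\Delta$. $E_u=\frac1n\sum_{i,j}q^{-i(u+j)}G^ie_j$. For an integer $r$, $\overline r^-\in\{0,\dots,d-1\}$ is its residue mod $d$. $L(u,j)$ is the simple module (unique up to isomorphism) of dimension $d-\overline{2j+u-1}^-$ on which $E_u$ acts as the identity and whose kernel of $X$ is one-dimensional, spanned by a vector $Y$ with $e_jY=Y$. *)

From HB Require Import structures.
From mathcomp Require Import all_boot all_order all_algebra.
From mathcomp.real_closed Require Import mxtens.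
Set Implicit Arguments. Unset Strict Implicit. Unset Printing Implicit Defensive.
Import GRing.Theory.
Local Open Scope ring_scope.

(* Index arithmetic in Z_n, represented by 'I_n : i + k (mod n). *)
Definition addo n (i : 'I_n) (k : nat) : 'I_n := iter k (@ordS n) i.

Definition mxpow (K : fieldType) m (A : 'M[K]_m) (k : nat) : 'M[K]_m :=
  iter k (mulmx A) 1%:M.

Definition qint (K : fieldType) (q : K) (m : nat) : K := \sum_(k < m) q ^+ k.

(* A (left) representation of the generators G, X, e_i, a_i (i in Z_n)
   of D(Lambda_{n,d}) on the column space K^m (matrices act on the left). *)
Record Drep (K : fieldType) (n m : nat) := {
  mG : 'M[K]_m;
  mX : 'M[K]_m;
  me : 'I_n -> 'M[K]_m;
  ma : 'I_n -> 'M[K]_m }.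

Fixpoint gam (K : fieldType) n m (R : Drep K n m) (l : 'I_n) (k : nat) : 'M[K]_m :=
  match k with
  | 0 => me R l
  | k'.+1 => ma R (addo l k') *m gam R l k'
  end.

Definition is_Drep (K : fieldType) n (d : nat) (q : K) m (R : Drep K n m) : Prop :=
  mxpow (mG R) n = 1%:M /\
      mxpow (mX R) d = 0 /\
      mG R *m mX R = q^-1 *: (mX R *m mG R) /\
      (forall i j, me R i *m me R j = if i == j then me R i else 0) /\
      \sum_(i < n) me R i = 1%:M /\
      (forall i, ma R i *m me R i = ma R i /\ me R (ordS i) *m ma R i = ma R i) /\
      (forall l, gam R l d = 0) /\
      (forall (l : 'I_n) (k : nat), (k < d)%N ->
         gam R l k *m mG R = (q ^+ k)^-1 *: (mG R *m gam R l k)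
         /\ gam R l k *m mX R =
            (q ^+ k)^-1 *: (mX R *m gam R (ordS l) k)
            - ((q ^+ k)^-1 * qint q k) *: gam R (ordS l) k.-1
            + (q ^+ (l + 1) * (q ^+ k)^-1 * qint q k) *: (mG R *m gam R (ordS l) k.-1)).

Definition submodule (K : fieldType) n m (R : Drep K n m) (S : 'cV[K]_m -> Prop) : Prop :=
  [/\ S 0,
      (forall v w, S v -> S w -> S (v + w)),
      (forall (c : K) v, S v -> S (c *: v)) &
      (forall v, S v -> [/\ S (mG R *m v), S (mX R *m v),
                           (forall i, S (me R i *m v)) & (forall i, S (ma R i *m v))])].

Definition simple_rep (K : fieldType) n m (R : Drep K n m) : Prop :=
  (0 < m)%N /\
  forall S, submodule R S -> (forall v, S v -> v = 0) \/ (forall v, S v).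

Definition Eidem (K : fieldType) n (q : K) m (R : Drep K n m) (u : 'I_n) : 'M[K]_m :=
  (n%:R)^-1 *: \sum_(i < n) \sum_(j < n)
      (q ^+ (i * (u + j)))^-1 *: (mxpow (mG R) i *m me R j).

(* R is (a copy of) the simple module L(u,j): a simple D(Lambda_{n,d})-module
   of dimension d - ((2j+u-1) mod d), on which E_u acts as the identity, and
   whose kernel of X is one-dimensional, spanned by Y with e_j Y = Y. *)
Definition is_L (K : fieldType) n d (q : K) m (R : Drep K n m) (u j : 'I_n) : Prop :=
  [/\ is_Drep d q R,
      simple_rep R,
      m = (d - (2 * j + u + d - 1) %% d)%N,
      Eidem q R u = 1%:M &
      exists Y : 'cV[K]_m, [/\ Y != 0, me R j *m Y = Y &
        forall w : 'cV[K]_m, mX R *m w = 0 <-> exists c : K, w = c *: Y]].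

(* Action of X on the tensor product via Delta(X) = X (x) G + 1 (x) X. *)
Definition Xtens (K : fieldType) n m1 m2 (M : Drep K n m1) (N : Drep K n m2)
  : 'M[K]_(m1 * m2) :=
  tensmx (mX M) (mG N) + tensmx (1%:M : 'M[K]_m1) (mX N).

(* In L(u,i) put b_s = gamma_i^s h.  The span of the b_s is a
   submodule containing h, hence everything, so b_s <> 0 for s < alpha; the
   idempotent e_{i+s} singles out b_s, so b_0, ..., b_{alpha-1} are independent.
   X lowers this string, X b_s = c_s b_{s-1} with c_s <> 0 for 0 < s < alpha
   (otherwise b_s would lie in ker X = K h, which e_i rules out), and G acts
   diagonally with nonzero eigenvalues; the same holds for b'_t in L(v,j).
   Hence the alpha * beta independent vectors z_{s,t} = b_s (x) b'_t form a basis,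
   and Delta(X) z_{s,t} is a combination of z_{s-1,t} and z_{s,t-1} with nonzero
   coefficients.  So Delta(X) y = 0 is a two-term recursion along each
   antidiagonal s + t = theta: it determines the coefficients of y from that of
   z_{0,theta} when theta < alpha, and forces them to vanish when
   theta >= alpha (starting from s = alpha - 1 and using alpha <= beta). *)

From HB Require Import structures.
From mathcomp Require Import all_boot all_order all_algebra.
From mathcomp.real_closed Require Import mxtens.
From mathcomp Require Import ring zify.
Set Implicit Arguments. Unset Strict Implicit. Unset Printing Implicit Defensive.
Import GRing.Theory.
Local Open Scope ring_scope.

Section FreeFamily.
Variables (K : fieldType) (vT : vectType K).

Definition free_family (I : finType) (w : I -> vT) :=
  forall c : I -> K, \sum_i c i *: w i = 0 -> forall i, c i = 0.

Lemma sum_enum_val (I : finType) (F : I -> vT) :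
  \sum_i F i = \sum_(r < #|I|) F (enum_val r).
Proof. by rewrite -big_enum_val; apply: eq_bigl => i; rewrite inE. Qed.

Lemma free_family_tuple (I : finType) (w : I -> vT) :
  free_family w -> free [tuple w (enum_val r) | r < #|I|].
Proof.
move=> wfree; apply/freeP => c c0 r; rewrite -(enum_valK r).
apply: (wfree (c \o enum_rank)); rewrite sum_enum_val -[RHS]c0.
by apply: eq_bigr => r' _; rewrite -tnth_nth tnth_mktuple /= enum_valK.
Qed.

Lemma free_family_span (I : finType) (w : I -> vT) :
  free_family w -> #|I| = \dim {:vT} ->
  forall v, exists c : I -> K, v = \sum_i c i *: w i.
Proof.
move=> /free_family_tuple freeX cardI v.
have basisX : basis_of fullv [tuple w (enum_val r) | r < #|I|].
  by rewrite basisEfree freeX subvf size_tuple cardI /=.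
exists (fun i => coord [tuple w (enum_val r) | r < #|I|] (enum_rank i) v).
rewrite {1}(coord_basis basisX (memvf v)) [RHS]sum_enum_val.
by apply: eq_bigr => r _; rewrite enum_valK -tnth_nth tnth_mktuple.
Qed.

End FreeFamily.

Lemma dim_cV (K : fieldType) m : \dim {:'cV[K]_m} = m.
Proof. by rewrite dimvf /dim /= muln1. Qed.

Section TensorProduct.
Variables (K : fieldType) (m1 m2 : nat).

Lemma tensmxZl p r c (A : 'M[K]_(m1, p)) (B : 'M[K]_(m2, r)) :
  tensmx (c *: A) B = c *: tensmx A B.
Proof. by apply/matrixP=> i j; rewrite !mxE mulrA. Qed.

Lemma tensmxZr p r c (A : 'M[K]_(m1, p)) (B : 'M[K]_(m2, r)) :
  tensmx A (c *: B) = c *: tensmx A B.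
Proof. by apply/matrixP=> i j; rewrite !mxE mulrCA. Qed.

Lemma tensmx_cVE (v : 'cV[K]_m1) (w : 'cV[K]_m2) k l (y : 'I_(1 * 1)) :
  tensmx v w (mxtens_index (k, l)) y = v k 0 * w l 0.
Proof. by rewrite !mxE mxtens_indexK; congr (v k _ * w l _); apply: ord1. Qed.

Lemma tensmx_free k1 k2 (w1 : 'I_k1 -> 'cV[K]_m1) (w2 : 'I_k2 -> 'cV[K]_m2) :
  free_family w1 -> free_family w2 ->
  free_family (fun p : 'I_k1 * 'I_k2 => tensmx (w1 p.1) (w2 p.2)).
Proof.
move=> free1 free2 c c0 [s t].
have {}c0 : \sum_s \sum_t c (s, t) *: tensmx (w1 s) (w2 t) = 0.
  by rewrite pair_bigA -[RHS]c0; apply: eq_bigr => -[].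
have row_eq0 k t' : \sum_s c (s, t') * w1 s k 0 = 0.
  apply: (free2 (fun t => \sum_s c (s, t) * w1 s k 0)); apply/colP => l.
  have := congr1 (fun A : 'M[K]_(m1 * m2, 1 * 1) => A (mxtens_index (k, l)) 0) c0; rewrite /= mxE => E.
  rewrite [RHS]mxE -[RHS]E !summxE.
  under eq_bigr do rewrite mxE mulr_suml.
  rewrite exchange_big; apply: eq_bigr => s' _; rewrite summxE; apply: eq_bigr => t'' _.
  by rewrite mxE tensmx_cVE mulrA.
apply: (free1 (fun s => c (s, t))) => //; apply/colP => k.
rewrite summxE [RHS]mxE -[RHS](row_eq0 k t).
by apply: eq_bigr => s' _; rewrite mxE.
Qed.

End TensorProduct.

Record string_basis (K : fieldType) m (X G : 'M[K]_m) (b : nat -> 'cV[K]_m)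
    (cx cg : nat -> K) : Prop := StringBasis {
  string_free : free_family (fun s : 'I_m => b s);
  string_lower : forall s, X *m b s = cx s *: b s.-1;
  string_lower0 : cx 0 = 0;
  string_lower_neq0 : forall s, (0 < s < m)%N -> cx s != 0;
  string_diag : forall s, G *m b s = cg s *: b s;
  string_diag_neq0 : forall s, (s < m)%N -> cg s != 0 }.

Lemma sum_shift (K : fieldType) (V : lmodType K) m (f : nat -> K) (g : nat -> V) :
  f 0%N = 0 ->
  \sum_(s < m) f s *: g s.-1 = \sum_(s < m) (if (s.+1 < m)%N then f s.+1 else 0) *: g s.
Proof.
move=> f0; case: m => [|m]; first by rewrite !big_ord0.
rewrite big_ord_recl /= f0 scale0r add0r big_ord_recr /= ltnn scale0r addr0.
by apply: eq_bigr => s _; rewrite /= ltnS ltn_ord.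
Qed.
Arguments sum_shift {K V m} f g.

Section TensorKernel.
Variables (K : fieldType) (m1 m2 : nat).
Variables (X1 G1 : 'M[K]_m1) (b1 : nat -> 'cV[K]_m1) (cx1 cg1 : nat -> K).
Variables (X2 G2 : 'M[K]_m2) (b2 : nat -> 'cV[K]_m2) (cx2 cg2 : nat -> K).
Hypotheses (S1 : string_basis X1 G1 b1 cx1 cg1) (S2 : string_basis X2 G2 b2 cx2 cg2).
Hypothesis m1_le_m2 : (m1 <= m2)%N.

Local Notation z s t := (tensmx (b1 s) (b2 t)).
Local Notation XT := (tensmx X1 G2 + tensmx (1%:M : 'M[K]_m1) X2).

Definition zsum (C : nat -> nat -> K) := \sum_(s < m1) \sum_(t < m2) C s t *: z s t.

Lemma eq_zsum C C' :
  (forall s t, (s < m1)%N -> (t < m2)%N -> C s t = C' s t) -> zsum C = zsum C'.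
Proof. by move=> CC'; apply: eq_bigr => s _; apply: eq_bigr => t _; rewrite CC'. Qed.

Lemma zsum_lincomb (I : finType) (b : I -> K) (F : I -> nat -> nat -> K) :
  \sum_i b i *: zsum (F i) = zsum (fun s t => \sum_i b i * F i s t).
Proof.
rewrite /zsum; under eq_bigr do rewrite scaler_sumr.
rewrite exchange_big; apply: eq_bigr => s _; under eq_bigr do rewrite scaler_sumr.
by rewrite exchange_big; apply: eq_bigr => t _; rewrite scaler_suml; under eq_bigr do rewrite scalerA.
Qed.

Lemma zsum_eq0 C : zsum C = 0 -> forall s t, (s < m1)%N -> (t < m2)%N -> C s t = 0.
Proof.
move=> C0 s t s_lt t_lt.
apply: (tensmx_free (string_free S1) (string_free S2) (c := fun p => C p.1 p.2) _
  (Ordinal s_lt, Ordinal t_lt)).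
by rewrite -(pair_bigA _ (fun (s : 'I_m1) (t : 'I_m2) => C s t *: z s t)).
Qed.

Definition Xcoef (C : nat -> nat -> K) s t :=
  (if (s.+1 < m1)%N then C s.+1 t * (cx1 s.+1 * cg2 t) else 0) +
  (if (t.+1 < m2)%N then C s t.+1 * cx2 t.+1 else 0).

Lemma XT_z s t : XT *m z s t = (cx1 s * cg2 t) *: z s.-1 t + cx2 t *: z s t.-1.
Proof.
rewrite mulmxDl !tensmx_mul (string_lower S1) (string_diag S2) (string_lower S2) mul1mx.
by rewrite tensmxZl !tensmxZr scalerA.
Qed.

Lemma XT_zsum C : XT *m zsum C = zsum (Xcoef C).
Proof.
rewrite /zsum mulmx_sumr; under eq_bigr do rewrite mulmx_sumr.
under eq_bigr do under eq_bigr do rewrite -scalemxAr XT_z scalerDr !scalerA.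
under eq_bigr do rewrite big_split /=.
rewrite big_split /= exchange_big /=.
under eq_bigr => t _ do rewrite (sum_shift (fun s => C s t * (cx1 s * cg2 t)) (fun s => z s t))
  ?(string_lower0 S1) ?mul0r ?mulr0 //.
under [X in _ + X]eq_bigr => s _ do rewrite (sum_shift (fun t => C s t * cx2 t) (fun t => z s t))
  ?(string_lower0 S2) ?mulr0 //.
rewrite exchange_big -big_split; apply: eq_bigr => s _.
by rewrite -big_split; apply: eq_bigr => t _; rewrite scalerDl.
Qed.

Definition Xkernel C := forall s t, (s < m1)%N -> (t < m2)%N -> Xcoef C s t = 0.

Lemma cx1cg2_neq0 s t : (0 < s < m1)%N -> (t < m2)%N -> cx1 s * cg2 t != 0.
Proof.
by move=> s_lt t_lt; rewrite mulf_neq0 ?(string_lower_neq0 S1) ?(string_diag_neq0 S2).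
Qed.

(* The coefficient of z_{s,t} in the kernel vector of degree s + t, normalised
   at s = 0: [Xcoef C s t = 0] solved for [C s.+1 t]. *)
Fixpoint kcoef s t : K :=
  if s is s'.+1 then - (kcoef s' t.+1 * cx2 t.+1) / (cx1 s * cg2 t) else 1.

Lemma kcoefS s t : (s.+1 < m1)%N -> (t < m2)%N ->
  kcoef s.+1 t * (cx1 s.+1 * cg2 t) = - (kcoef s t.+1 * cx2 t.+1).
Proof. by move=> s_lt t_lt; rewrite /= divfK // cx1cg2_neq0. Qed.

Lemma Xkernel_low C : Xkernel C ->
  forall s t, (s + t < m1)%N -> C s t = C 0%N (s + t)%N * kcoef s t.
Proof.
move=> XC; elim=> [|s IH] t st_lt; first by rewrite mulr1.
have s_lt : (s.+1 < m1)%N by lia.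
have t_lt : (t.+1 < m2)%N by lia.
have := XC s t (ltnW s_lt) (ltnW t_lt); rewrite /Xcoef s_lt t_lt => /eqP.
rewrite addr_eq0 => /eqP Cst.
have a_neq0 : cx1 s.+1 * cg2 t != 0 by apply: cx1cg2_neq0; lia.
apply: (mulIf a_neq0).
rewrite Cst IH -?addSnnS; last lia.
by rewrite -[RHS]mulrA kcoefS ?mulrN ?mulrA //; lia.
Qed.

(* Descending induction on s: in the last row s = m1 - 1 there is no z_{s+1,t} term. *)
Lemma Xkernel_high C : Xkernel C ->
  forall s t, (s < m1)%N -> (t < m2)%N -> (m1 <= s + t)%N -> C s t = 0.
Proof.
move=> XC s t; move def_k: (m1 - s)%N => k.
elim: k s t def_k => [|k IH] s [|t] def_k s_lt t_lt st_ge; try lia.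
have C_next : (if (s.+1 < m1)%N then C s.+1 t * (cx1 s.+1 * cg2 t) else 0) = 0.
  by case: ifP => // s1_lt; rewrite IH ?mul0r //; lia.
have cx2_neq0 : cx2 t.+1 != 0 by apply: (string_lower_neq0 S2); lia.
have := XC s t s_lt (ltnW t_lt); rewrite /Xcoef C_next t_lt add0r => /eqP.
by rewrite mulf_eq0 (negbTE cx2_neq0) orbF => /eqP.
Qed.

Definition kercoef th s t := if (s + t == th)%N then kcoef s t else 0.

Definition kervec th := zsum (kercoef th).

Lemma Xkernel_kercoef th : (th < m1)%N -> Xkernel (kercoef th).
Proof.
move=> th_lt s t s_lt t_lt; rewrite /Xcoef /kercoef -addSnnS.
have [st_eq|st_neq] := eqVneq (s.+1 + t)%N th; last by rewrite !mul0r !if_same addr0.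
have s1_lt : (s.+1 < m1)%N by lia.
have t1_lt : (t.+1 < m2)%N by lia.
by rewrite s1_lt t1_lt kcoefS ?addNr.
Qed.

Lemma zsum0 : zsum (fun _ _ => 0) = 0.
Proof. by rewrite /zsum big1 // => s _; rewrite big1 // => t _; rewrite scale0r. Qed.

Lemma XT_kervec th : (th < m1)%N -> XT *m kervec th = 0.
Proof.
by move=> th_lt; rewrite XT_zsum -zsum0; apply: eq_zsum; apply: Xkernel_kercoef.
Qed.

Lemma zsum_Xkernel C : Xkernel C -> zsum C = \sum_(th < m1) C 0%N th *: kervec th.
Proof.
move=> XC; rewrite zsum_lincomb; apply: eq_zsum => s t s_lt t_lt.
under eq_bigr do rewrite /kercoef eq_sym (fun_if (GRing.mul _)) mulr0.
rewrite -big_mkcond (big_ord1_eq _ (fun i => C 0%N i * kcoef s t)).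
case: ifP => st_lt; first exact: Xkernel_low.
by apply: Xkernel_high => //; rewrite leqNgt st_lt.
Qed.

Definition natcoef (c : 'I_m1 -> 'I_m2 -> K) s t : K :=
  if (insub s, insub t) is (Some s', Some t') then c s' t' else 0.

Lemma natcoefE c s t (s_lt : (s < m1)%N) (t_lt : (t < m2)%N) :
  natcoef c s t = c (Ordinal s_lt) (Ordinal t_lt).
Proof. by rewrite /natcoef !insubT. Qed.

Lemma sum_natcoef c : \sum_(s < m1) \sum_(t < m2) c s t *: z s t = zsum (natcoef c).
Proof. by apply: eq_bigr => s _; apply: eq_bigr => t _; rewrite /natcoef !valK. Qed.

Lemma tens_string_free (c : 'I_m1 -> 'I_m2 -> K) :
  \sum_(s < m1) \sum_(t < m2) c s t *: z s t = 0 -> forall s t, c s t = 0.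
Proof.
by rewrite sum_natcoef => /zsum_eq0 c0 s t; rewrite -(c0 s t) // natcoefE; congr c; apply: val_inj.
Qed.

Lemma tens_string_span y :
  exists c : 'I_m1 -> 'I_m2 -> K, y = \sum_(s < m1) \sum_(t < m2) c s t *: z s t.
Proof.
have [|c ->] := free_family_span (tensmx_free (string_free S1) (string_free S2)) _ y.
  by rewrite card_prod !card_ord dim_cV.
by exists (fun s t => c (s, t)); rewrite pair_bigA; apply: eq_bigr => -[].
Qed.

Lemma kervec_neq0 (th : 'I_m1) : kervec th != 0.
Proof.
apply/eqP => /zsum_eq0 /(_ 0%N th) th0.
have: kercoef th 0 th = 0 by apply: th0; have := ltn_ord th; lia.
by rewrite /kercoef eqxx /= => /eqP; rewrite oner_eq0.
Qed.

Lemma kervec_homog th :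
  kervec th = \sum_(s < m1) \sum_(t < m2 | (s + t)%N == th) kcoef s t *: z s t.
Proof.
rewrite /kervec /zsum; apply: eq_bigr => s _; rewrite [RHS]big_mkcond.
apply: eq_bigr => t _.
by rewrite /kercoef; case: ifP; rewrite ?scale0r.
Qed.

Lemma kervec_free : free_family (fun th : 'I_m1 => kervec th).
Proof.
move=> b; rewrite zsum_lincomb => /zsum_eq0 b0 th.
have: \sum_(th' < m1) b th' * kercoef th' 0 th = 0.
  by apply: b0; have := ltn_ord th; lia.
rewrite (bigD1 th) //= big1 => [|th' th'_neq]; first by rewrite /kercoef eqxx mulr1 addr0.
by rewrite /kercoef add0n val_eqE eq_sym (negbTE th'_neq) mulr0.
Qed.

Lemma ker_XT y :
  XT *m y = 0 <-> exists b : 'I_m1 -> K, y = \sum_(th < m1) b th *: kervec th.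
Proof.
split=> [|[b ->]]; last first.
  by rewrite mulmx_sumr big1 // => th _; rewrite -scalemxAr XT_kervec ?scaler0.
have [c ->] := tens_string_span y; rewrite sum_natcoef XT_zsum => /zsum_eq0 XC.
by exists (fun th => natcoef c 0%N th); apply: zsum_Xkernel.
Qed.

Lemma ker_XT_homog (th : 'I_m1) y (c : 'I_m1 -> 'I_m2 -> K) :
  XT *m y = 0 -> y = \sum_(s < m1) \sum_(t < m2 | (s + t)%N == th) c s t *: z s t ->
  exists a, y = a *: kervec th.
Proof.
pose C := natcoef (fun s t => if (s + t)%N == th then c s t else 0).
have -> : \sum_(s < m1) \sum_(t < m2 | (s + t)%N == th) c s t *: z s t = zsum C.
  rewrite -sum_natcoef; apply: eq_bigr => s _; rewrite big_mkcond; apply: eq_bigr => t _.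
  by case: ifP; rewrite ?scale0r.
move=> + y_eq; rewrite y_eq XT_zsum => /zsum_eq0 XC; exists (C 0%N th).
rewrite (zsum_Xkernel XC) (bigD1 th) //= big1 ?addr0 // => th' th'_neq.
have th'_lt : (th' < m2)%N by have := ltn_ord th'; lia.
have m1_gt0 : (0 < m1)%N by have := ltn_ord th; lia.
by rewrite /C (natcoefE _ m1_gt0 th'_lt) /= val_eqE (negbTE th'_neq) scale0r.
Qed.

End TensorKernel.

Section SimpleModule.
Variables (K : fieldType) (n d : nat) (q : K) (m : nat) (M : Drep K n m) (u i : 'I_n).
Variable h : 'cV[K]_m.
Hypotheses (d_dvd_n : (d %| n)%N) (n_neq0 : n%:R != 0 :> K) (q_prim : d.-primitive_root q).
Hypotheses (ML : is_L d q M u i) (h_neq0 : h != 0) (Xh : mX M *m h = 0).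

Local Notation G := (mG M).
Local Notation X := (mX M).
Local Notation e := (me M).
Local Notation a := (ma M).

Let MD : is_Drep d q M. Proof. by case: ML. Qed.

Lemma mG_order : mxpow G n = 1%:M. Proof. by case: MD. Qed.
Lemma mGX : G *m X = q^-1 *: (X *m G). Proof. by case: MD => _ [_ []]. Qed.
Lemma me_mul l l' : e l *m e l' = if l == l' then e l else 0.
Proof. by case: MD => _ [_ [_ []]]. Qed.
Lemma ma_me l : a l *m e l = a l.
Proof. by case: MD => _ [_ [_ [_ [_ [/(_ l) []]]]]]. Qed.
Lemma me_ma l : e (ordS l) *m a l = a l.
Proof. by case: MD => _ [_ [_ [_ [_ [/(_ l) []]]]]]. Qed.
Lemma gam_d l : gam M l d = 0.
Proof. by case: MD => _ [_ [_ [_ [_ [_ []]]]]]. Qed.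
Lemma gam_mX l k : (k < d)%N ->
  gam M l k *m X =
    (q ^+ k)^-1 *: (X *m gam M (ordS l) k)
    - ((q ^+ k)^-1 * qint q k) *: gam M (ordS l) k.-1
    + (q ^+ (l + 1) * (q ^+ k)^-1 * qint q k) *: (G *m gam M (ordS l) k.-1).
Proof. by case: MD => _ [_ [_ [_ [_ [_ [_ /(_ l k) H]]]]]] /H []. Qed.
Lemma gam_mG l k : (k < d)%N -> gam M l k *m G = (q ^+ k)^-1 *: (G *m gam M l k).
Proof. by case: MD => _ [_ [_ [_ [_ [_ [_ /(_ l k) H]]]]]] /H []. Qed.

Lemma m_le_d : (m <= d)%N. Proof. by case: ML => _ _ m_eq _ _; rewrite m_eq leq_subr. Qed.

Lemma kerX w : X *m w = 0 -> exists c, w = c *: h.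
Proof.
case: ML => _ _ _ _ [Y [_ _ kerY]].
have [c0 hY] := (kerY h).1 Xh.
have c0_neq0 : c0 != 0 by apply: contraNneq h_neq0 => c00; rewrite hY c00 scale0r.
by move=> /kerY [c ->]; exists (c / c0); rewrite hY scalerA mulfVK.
Qed.

Lemma me_h : e i *m h = h.
Proof.
case: ML => _ _ _ _ [Y [_ eY kerY]].
by have [c ->] := (kerY h).1 Xh; rewrite -scalemxAr eY.
Qed.

Lemma q_neq0 : q != 0.
Proof.
apply/eqP => q0; have := prim_expr_order q_prim.
by rewrite q0 expr0n gtn_eqF ?(prim_order_gt0 q_prim) // => /eqP; rewrite eq_sym oner_eq0.
Qed.

Lemma addo_inj s s' : (s < d)%N -> (s' < d)%N -> addo i s = addo i s' -> s = s'.
Proof.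
have addoE k : nat_of_ord (addo i k) = ((i + k) %% n)%N.
  elim: k => [|k IH]; first by rewrite addn0 modn_small.
  by rewrite /addo iterS -/(addo i k) /= IH -addn1 modnDml addn1 addnS.
have n_gt0 : (0 < n)%N by case: n n_neq0 => //; rewrite eqxx.
have d_le_n : (d <= n)%N by apply: dvdn_leq.
move=> s_lt s'_lt /(congr1 val); rewrite /= !addoE => /eqP.
by rewrite eqn_modDl !modn_small ?(leq_trans _ d_le_n) // => /eqP.
Qed.

Definition gamv s := gam M i s *m h.

Lemma gamv0 : gamv 0 = h.
Proof. by rewrite /gamv /= me_h. Qed.

Lemma gamvS s : gamv s.+1 = a (addo i s) *m gamv s.
Proof. by rewrite /gamv /= mulmxA. Qed.

Lemma me_gamv l s : e l *m gamv s = if l == addo i s then gamv s else 0.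
Proof.
have e_gam : e (addo i s) *m gam M i s = gam M i s.
  by elim: s => [|s IH] /=; rewrite ?me_mul ?eqxx // mulmxA me_ma.
rewrite /gamv -e_gam !mulmxA me_mul; case: eqP => [->|_]; first by rewrite e_gam.
by rewrite !mul0mx.
Qed.

Lemma ma_gamv l s : a l *m gamv s = if l == addo i s then gamv s.+1 else 0.
Proof.
rewrite -ma_me -mulmxA me_gamv; case: eqP => [->|_]; last by rewrite mulmx0.
by rewrite gamvS.
Qed.

Lemma gamv_eq0 s t : (s <= t)%N -> gamv s = 0 -> gamv t = 0.
Proof.
move=> /subnKC <-; elim: (t - s)%N => [|k IH gs0]; first by rewrite addn0.
by rewrite addnS; have := ma_gamv (addo i (s + k)) (s + k); rewrite eqxx IH // mulmx0.
Qed.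

Lemma gamv_ge_d s : (d <= s)%N -> gamv s = 0.
Proof. by move/gamv_eq0; apply; rewrite /gamv gam_d mul0mx. Qed.

Lemma mG_h_eigen : exists lam, G *m h == lam *: h.
Proof.
have [lam ->] : exists lam, G *m h = lam *: h.
  apply: kerX; rewrite mulmxA.
  have -> : X *m G = q *: (G *m X) by rewrite mGX scalerA mulfV ?q_neq0 // scale1r.
  by rewrite -scalemxAl -mulmxA Xh mulmx0 scaler0.
by exists lam.
Qed.

Definition lamG := xchoose mG_h_eigen.

Lemma mG_h : G *m h = lamG *: h.
Proof. exact/eqP/(xchooseP mG_h_eigen). Qed.

Lemma lamG_neq0 : lamG != 0.
Proof.
apply: contraNneq h_neq0 => lam0.
have G_inv : mxpow G n.-1 *m G = 1%:M.
  apply: mulmx1C; have n_gt0 : (0 < n)%N by case: n n_neq0 => //; rewrite eqxx.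
  have mxpowS (A : 'M[K]_m) k : (0 < k)%N -> mxpow A k = A *m mxpow A k.-1 by case: k.
  by rewrite -mxpowS ?mG_order.
by rewrite -[h]mul1mx -G_inv -mulmxA mG_h lam0 scale0r mulmx0.
Qed.

Definition eigG s := q ^+ s * lamG.

Lemma mG_gamv s : G *m gamv s = eigG s *: gamv s.
Proof.
have [s_lt|s_ge] := ltnP s d; last by rewrite gamv_ge_d // mulmx0 scaler0.
have Ggam : G *m gam M i s = q ^+ s *: (gam M i s *m G).
  by rewrite (gam_mG i s_lt) scalerA mulfV ?scale1r // expf_neq0 // q_neq0.
by rewrite /gamv mulmxA Ggam -scalemxAl -mulmxA mG_h -scalemxAr scalerA.
Qed.

Definition lowX k :=
  if (k < d)%N then qint q k * (1 - q ^+ (ord_pred i + 1) * eigG k.-1) else 0.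

Lemma mX_gamv k : X *m gamv k = lowX k *: gamv k.-1.
Proof.
rewrite /lowX; case: k => [|k]; first by rewrite gamv0 Xh /qint big_ord0 mul0r if_same scale0r.
have [k_lt|k_ge] := ltnP k.+1 d; last by rewrite gamv_ge_d // mulmx0 scale0r.
(* The commutation relation of gamma_{i-1}^{k+1} with X, applied to h. *)
have := congr1 (mulmx^~ h) (gam_mX (ord_pred i) k_lt); cbv beta.
rewrite ord_predK -mulmxA Xh mulmx0 !mulmxDl mulNmx -!scalemxAl -!mulmxA.
rewrite -/(gamv k.+1) -/(gamv k) mG_gamv => /eqP.
rewrite eq_sym addrAC subr_eq add0r => /eqP /(canRL (addrK _)) XE.
have qk_neq0 : q ^+ k.+1 != 0 by rewrite expf_neq0 // q_neq0.
rewrite gamvS -[X *m _](scalerKV qk_neq0) XE !scalerA -scalerBl scalerA.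
by congr (_ *: _); field.
Qed.

Definition gam_span := <<[seq gamv s | s <- iota 0 d]>>%VS.

Lemma gamv_in_span s : gamv s \in gam_span.
Proof.
have [s_lt|s_ge] := ltnP s d; last by rewrite gamv_ge_d ?mem0v.
by apply/memv_span/map_f; rewrite mem_iota.
Qed.

Lemma mulmx_gam_span (A : 'M[K]_m) :
  (forall s, A *m gamv s \in gam_span) -> forall v, v \in gam_span -> A *m v \in gam_span.
Proof.
move=> A_gen v v_in.
have span_preim : (gam_span <= linfun (mulmx A) @^-1: gam_span)%VS.
  by apply/span_subvP => _ /mapP[s _ ->]; rewrite -memv_preim lfunE A_gen.
by move/subvP/(_ v v_in): span_preim; rewrite -memv_preim lfunE.
Qed.

Lemma gam_span_full v : v \in gam_span.
Proof.
have span_sub : submodule M (fun v => v \in gam_span).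
  split=> [|v1 v2|c v1|v1 v1_in]; [exact: mem0v | exact: memvD | exact: memvZ |].
  split=> [||l|l]; apply: mulmx_gam_span v1_in => s.
  - by rewrite mG_gamv memvZ ?gamv_in_span.
  - by rewrite mX_gamv memvZ ?gamv_in_span.
  - by rewrite me_gamv; case: ifP; rewrite ?mem0v ?gamv_in_span.
  - by rewrite ma_gamv; case: ifP; rewrite ?mem0v ?gamv_in_span.
have [_ /(_ _ span_sub) [span0|//]] : simple_rep M by case: ML.
by move: h_neq0; rewrite -gamv0 (span0 _ (gamv_in_span 0)) eqxx.
Qed.

Lemma gamv_neq0 s : (s < m)%N -> gamv s != 0.
Proof.
move=> s_lt; apply/eqP => gs0.
have: (fullv <= <<[seq gamv t | t <- iota 0 s]>>)%VS.
  apply/subvP => v _; move: (gam_span_full v); apply/subvP/span_subvP => _ /mapP[t _ ->].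
  have [t_lt|t_ge] := ltnP t s; last by rewrite (gamv_eq0 t_ge gs0) mem0v.
  by apply/memv_span/map_f; rewrite mem_iota.
move/dimvS; rewrite dim_cV => /leq_trans/(_ (dim_span _)).
by rewrite size_map size_iota leqNgt s_lt.
Qed.

Lemma gamv_free : free_family (fun s : 'I_m => gamv s).
Proof.
move=> c c0 s; have s_ltd := leq_trans (ltn_ord s) m_le_d.
have := congr1 (mulmx (e (addo i s))) c0; rewrite mulmx0 mulmx_sumr (bigD1 s) //= big1.
  rewrite addr0 -scalemxAr me_gamv eqxx => /eqP.
  by rewrite scaler_eq0 (negbTE (gamv_neq0 (ltn_ord s))) orbF => /eqP.
move=> s' s'_neq; rewrite -scalemxAr me_gamv; case: eqP => [eq_addo|]; last by rewrite scaler0.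
have s'_ltd := leq_trans (ltn_ord s') m_le_d.
by move: s'_neq; rewrite (val_inj (addo_inj s_ltd s'_ltd eq_addo)) eqxx.
Qed.

Lemma lowX_neq0 s : (0 < s < m)%N -> lowX s != 0.
Proof.
case/andP => s_gt0 s_lt; apply/eqP => low0.
have [c gs_eq] : exists c, gamv s = c *: h by apply: kerX; rewrite mX_gamv low0 scale0r.
have s_ltd := leq_trans s_lt m_le_d.
have := me_gamv i s; rewrite gs_eq -scalemxAr me_h.
have -> : (i == addo i s) = false.
  apply/eqP => eq_i; have d_gt0 : (0 < d)%N by apply: leq_ltn_trans s_ltd.
  by move: s_gt0; rewrite -(addo_inj d_gt0 s_ltd eq_i).
by move=> hc0; move: (gamv_neq0 s_lt); rewrite gs_eq hc0 eqxx.
Qed.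

Lemma gam_string_basis : string_basis X G gamv lowX eigG.
Proof.
split; [exact: gamv_free | exact: mX_gamv | | exact: lowX_neq0 | exact: mG_gamv |].
  by rewrite /lowX /qint big_ord0 mul0r if_same.
by move=> s _; rewrite mulf_neq0 ?expf_neq0 ?q_neq0 ?lamG_neq0.
Qed.

End SimpleModule.

Theorem mainTheorem11 (K : closedFieldType) (n d : nat) (q : K)
  (u i v j : 'I_n) (m1 m2 : nat) (M : Drep K n m1) (N : Drep K n m2)
  (h : 'cV[K]_m1) (h' : 'cV[K]_m2) :
  (2 <= d)%N -> (d %| n)%N -> (n%:R : K) != 0 -> d.-primitive_root q ->
  is_L d q M u i -> is_L d q N v j -> (m1 <= m2)%N ->
  h != 0 -> mX M *m h = 0 -> h' != 0 -> mX N *m h' = 0 ->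
  let z := fun (s : 'I_m1) (t : 'I_m2) =>
             tensmx (gam M i s *m h) (gam N j t *m h') in
  let homog := fun (th : nat) (y : 'M[K]_(m1 * m2, 1 * 1)) =>
    exists c : 'I_m1 -> 'I_m2 -> K,
      y = \sum_(s < m1) \sum_(t < m2 | (s + t)%N == th) c s t *: z s t in
  let XT := Xtens M N in
  (* the z_{s,t} form a basis of L(u,i) (x) L(v,j) *)
  (forall c : 'I_m1 -> 'I_m2 -> K,
     \sum_(s < m1) \sum_(t < m2) c s t *: z s t = 0 -> forall s t, c s t = 0) /\
  (forall y : 'M[K]_(m1 * m2, 1 * 1),
     exists c : 'I_m1 -> 'I_m2 -> K, y = \sum_(s < m1) \sum_(t < m2) c s t *: z s t) /\
  (* ker X has a basis (x_th)_{th < alpha}, x_th homogeneous of degree th,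
     unique up to scalars in each degree *)
  exists x : 'I_m1 -> 'M[K]_(m1 * m2, 1 * 1),
    (forall th : 'I_m1, [/\ x th != 0, XT *m x th = 0 & homog th (x th)]) /\
    (forall b : 'I_m1 -> K, \sum_(th < m1) b th *: x th = 0 -> forall th, b th = 0) /\
    (forall y, XT *m y = 0 <-> exists b : 'I_m1 -> K, y = \sum_(th < m1) b th *: x th) /\
    (forall (th : 'I_m1) y, XT *m y = 0 -> homog th y -> exists c : K, y = c *: x th).
Proof.
move=> _ d_dvd_n n_neq0 q_prim ML NL m12 h_neq0 Xh h'_neq0 Xh' z homog XT.
have SM := gam_string_basis d_dvd_n n_neq0 q_prim ML h_neq0 Xh.
have SN := gam_string_basis d_dvd_n n_neq0 q_prim NL h'_neq0 Xh'.
split; first exact: tens_string_free SM SN.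
split; first exact: tens_string_span SM SN.
exists (fun th : 'I_m1 => kervec (gamv M i h) (lowX q_prim ML h_neq0 Xh)
  (gamv N j h') (lowX q_prim NL h'_neq0 Xh') (eigG q_prim NL h'_neq0 Xh') th); split.
  move=> th; split; [exact: kervec_neq0 SM SN m12 th | exact (XT_kervec SM SN m12 (ltn_ord th)) |].
  by eexists; apply: kervec_homog.
split; first exact: kervec_free SM SN m12.
split; first exact: ker_XT SM SN m12.
by move=> th y Xy [c]; apply: ker_XT_homog SM SN m12 th y c Xy.
Qed.
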